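(* Let $q$ be a prime power, $h\ge 2$, and $m>\max\{q^{h-1},hq-1\}$. Let $f(X)=\sum_{i=0}^{h-1}f_iX^{q^i}$ and $g(X)=\sum_{i=0}^{h-1}g_iX^{q^i}$ be invertible $\mathbb F_q$-linearised polynomials over $\mathbb F_{q^h}$. If $(f,g)$ satisfies property $(Prop_m)$, then $|\{i: f_i=0\}|=|\{i:g_i=0\}|\ge 1$.
   Context: An $\mathbb F_q$-linearised polynomial over $\mathbb F_{q^h}$ is $\sum_{l=0}^{h-1}a_lX^{q^l}$ with $a_l\in\mathbb F_{q^h}$, viewed as a map of $\mathbb F_{q^h}$; invertible means bijective. Identities $\equiv$ mean equality as maps. Property $(Prop_m)$: $(f,g)$ satisfies it if there exist triples $(a_j,b_j,c_j)\in(\mathbb F_{q^h}^* )^3$, $1\le j\le m$, with $(a_1,b_1,c_1)=(1,1,1)$, such that $a_jf(b_jf^{-1}(X))\equiv g(c_jg^{-1}(X))$ for every $j$, and for all $i\ne j$: $a_i\ne a_j$, $b_i\ne b_j$, $c_i\ne c_j$. *)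

From HB Require Import structures.
From mathcomp Require Import all_boot all_order all_algebra all_field.
Set Implicit Arguments. Unset Strict Implicit. Unset Printing Implicit Defensive.
Import GRing.Theory.
Local Open Scope ring_scope.

Definition prime_power (q : nat) : Prop :=
  exists p k : nat, [/\ prime p, (0 < k)%N & q = (p ^ k)%N].

Definition linpoly (K : fieldType) (q h : nat) (a : 'I_h -> K) (x : K) : K :=
  \sum_(l < h) a l * x ^+ (q ^ l)%N.

(* Triples are indexed by j = 0, ..., m-1 (the paper's
   j = 1, ..., m), and the first triple is (1,1,1). *)
Definition Prop_m (K : fieldType) (m : nat) (F Finv G Ginv : K -> K) : Prop :=
  exists a b c : nat -> K,
    [/\ forall j, (j < m)%N -> [/\ a j != 0, b j != 0 & c j != 0],
        [/\ a 0%N = 1, b 0%N = 1 & c 0%N = 1],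
        forall j, (j < m)%N -> forall x, a j * F (b j * Finv x) = G (c j * Ginv x)
      & forall i j, (i < m)%N -> (j < m)%N -> i <> j ->
          [/\ a i != a j, b i != b j & c i != c j]].

(* Let T := g^-1 o f, again an invertible linearised polynomial.  Each triple
   of (Prop_m) becomes a_j f(b_j X) = g(c_j T(X)), and the coefficient of
   X^(q^l) on the right is a linearised polynomial in c_j.  Since m > q^(h-1),
   the distinct c_j cannot all be roots of a nonzero linearised polynomial, so
   f_(i+k) = 0 forces g_i T_k = 0: the support of g, shifted by any k with
   T_k <> 0, lies in the support of f, and by symmetry the two supports have
   the same size.  If no coefficient vanished, comparing the identity with its
   q-th power eliminates b_j and makes every a_j^(q-1) an eigenvalue of one
   fixed h x h matrix built from the Dickson matrix of T; as x |-> x^(q-1) is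
   at most (q-1)-to-one, m <= h(q-1), contradicting m > hq - 1. *)

From HB Require Import structures.
From mathcomp Require Import all_boot all_order all_algebra all_field.
From mathcomp Require Import fingroup perm ring.
Set Implicit Arguments. Unset Strict Implicit. Unset Printing Implicit Defensive.
Import GRing.Theory.
Local Open Scope ring_scope.

Lemma uniq_map_iota (T : eqType) (c : nat -> T) m :
  (forall i j, (i < m)%N -> (j < m)%N -> i <> j -> c i != c j) ->
  uniq [seq c j | j <- iota 0 m].
Proof.
move=> c_neq; rewrite map_inj_in_uniq ?iota_uniq // => i j.
rewrite !mem_iota !add0n => i_lt j_lt cij.
case: (eqVneq i j) => // /eqP ij.
by have := c_neq i j i_lt j_lt ij; rewrite cij eqxx.
Qed.

Lemma size_le_fibers (R : idomainType) e (s L : seq R) : (0 < e)%N -> uniq s ->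
  {in s, forall x, x ^+ e \in L} -> (size s <= size L * e)%N.
Proof.
move=> e_gt0; elim: L s => [|y L IHL] s s_uniq sL.
  by case: s s_uniq sL => // x s _ /(_ x (mem_head _ _)).
rewrite -(count_predC (fun x => x ^+ e == y)) mulSn -!size_filter leq_add //.
- have Xe_neq0 : 'X^e - y%:P != 0 by rewrite -size_poly_eq0 size_XnsubC.
  rewrite -ltnS -(size_XnsubC y e_gt0).
  apply: max_poly_roots Xe_neq0 _ (filter_uniq _ s_uniq).
  apply/allP => x; rewrite mem_filter => /andP[/eqP xe _].
  by rewrite /root !hornerE xe subrr.
- apply: IHL => [|x]; first exact: filter_uniq.
  by rewrite mem_filter => /andP[/= xe /sL]; rewrite inE (negbTE xe).
Qed.

Lemma expr_sum_pchar (R : comNzRingType) e (I : Type) (r : seq I) (P : pred I)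
    (F : I -> R) : [pchar R].-nat e ->
  (\sum_(i <- r | P i) F i) ^+ e = \sum_(i <- r | P i) F i ^+ e.
Proof.
move=> e_pchar; have /andP[e_gt0 _] := e_pchar.
apply: (big_morph (fun x => x ^+ e)) => [x y|]; first exact: exprDn_pchar.
by rewrite expr0n gtn_eqF.
Qed.

Lemma prime_power_pchar (K : finFieldType) q h :
  prime_power q -> #|K| = (q ^ h)%N -> [pchar K].-nat q.
Proof.
case=> p [k [p_prime k_gt0 ->]] cardK.
have p_char : p \in [pchar K] by apply: card_finPcharP p_prime; rewrite cardK -expnM.
by rewrite pnatX (pnatE _ p_prime) p_char.
Qed.

Lemma card_zeros_eq (I : finType) (R : nmodType) (s t : I -> R) :
  #|[set i | s i != 0]| = #|[set i | t i != 0]| ->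
  #|[set i | s i == 0]| = #|[set i | t i == 0]|.
Proof.
have zerosE (u : I -> R) : [set i | u i == 0] = ~: [set i | u i != 0].
  by apply/setP => i; rewrite !inE negbK.
have cardC (A : {set I}) : #|~: A| = (#|I| - #|A|)%N by rewrite cardsCs setCK.
by move=> st; rewrite !zerosE !cardC st.
Qed.

Lemma card_zeros_eq0 (I : finType) (R : nmodType) (s : I -> R) :
  #|[set i | s i == 0]| = 0%N -> forall i, s i != 0.
Proof.
by move/eqP; rewrite cards_eq0 => /eqP/setP s0 i; have := s0 i; rewrite !inE => ->.
Qed.

Lemma Prop_m_sym (K : fieldType) m (F Finv G Ginv : K -> K) :
  Prop_m m F Finv G Ginv -> Prop_m m G Ginv F Finv.
Proof.
case=> a [b [c [nz [a0 b0 c0] eqs distinct]]].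
exists (fun j => (a j)^-1), c, b; split.
- by move=> j j_lt; have [? ? ?] := nz j j_lt; rewrite invr_eq0.
- by rewrite a0 invr1.
- by move=> j j_lt x; have [a_neq0 _ _] := nz j j_lt; rewrite -eqs // mulKf.
- move=> i j i_lt j_lt ij; have [? ? ?] := distinct i j i_lt j_lt ij.
  by rewrite (inj_eq invr_inj).
Qed.

Section LinearisedPolynomials.

Variables (K : finFieldType) (q n : nat).
(* Coefficient indices live in the ring 'I_H = Z/HZ, so that l - i and i - 1
   wrap around; 'I_n.+1 would only be a Z-module, hence H := n.+2. *)
Local Notation H := n.+2.
Hypothesis q_pchar : [pchar K].-nat q.
Hypothesis cardK : #|K| = (q ^ H)%N.

Local Notation coefs := ('I_H -> K).
Local Notation lin := (@linpoly K q H).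

Lemma q_gt1 : (1 < q)%N.
Proof.
have := card_finNzRing_gt1 K; rewrite cardK.
by case: q => [|[|//]]; rewrite ?exp1n // exp0n.
Qed.

Lemma qexp0 i : (0 : K) ^+ (q ^ i) = 0.
Proof. by rewrite expr0n expn_eq0 gtn_eqF // ltnW // q_gt1. Qed.

Lemma qexp_sum i (I : Type) (r : seq I) (P : pred I) (F : I -> K) :
  (\sum_(j <- r | P j) F j) ^+ (q ^ i) = \sum_(j <- r | P j) F j ^+ (q ^ i).
Proof. by apply: expr_sum_pchar; rewrite pnatX q_pchar. Qed.

Lemma qexp_ordD (x : K) (i j : 'I_H) :
  (x ^+ (q ^ i)) ^+ (q ^ j) = x ^+ (q ^ (i + j)%R).
Proof.
have qexpH (y : K) e : y ^+ (q ^ (e * H)) = y.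
  elim: e => [|e IHe]; first by rewrite expr1.
  by rewrite mulSn expnD exprM -cardK expf_card IHe.
by rewrite -exprM -expnD {1}(divn_eq (i + j) H) expnD exprM qexpH.
Qed.

Definition coef_id : coefs := fun l => (l == 0)%:R.

Definition coef_comp (s t : coefs) : coefs :=
  fun l => \sum_(i < H) s i * t (l - i) ^+ (q ^ i).

Lemma linpoly0 s : lin s 0 = 0.
Proof. by apply: big1 => l _; rewrite qexp0 mulr0. Qed.

Lemma linpoly_id x : lin coef_id x = x.
Proof.
rewrite /linpoly (bigD1 ord0) //= big1 ?addr0 ?mul1r ?expr1 //.
by move=> i /negbTE i_neq0; rewrite /coef_id i_neq0 mul0r.
Qed.

Lemma linpoly_scale s a x : a * lin s x = lin (fun l => a * s l) x.
Proof. by rewrite /linpoly mulr_sumr; apply: eq_bigr => l _; rewrite mulrA. Qed.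

Lemma linpoly_argM s b x : lin s (b * x) = lin (fun l => s l * b ^+ (q ^ l)) x.
Proof. by apply: eq_bigr => l _; rewrite exprMn mulrA. Qed.

Lemma linpoly_comp s t x : lin s (lin t x) = lin (coef_comp s t) x.
Proof.
rewrite /linpoly /coef_comp.
under eq_bigr => i _ do rewrite qexp_sum mulr_sumr.
under [RHS]eq_bigr => l _ do rewrite mulr_suml.
rewrite [RHS]exchange_big /=; apply: eq_bigr => i _.
rewrite [RHS](reindex_inj (addIr i)) /=; apply: eq_bigr => k _.
by rewrite addrK exprMn qexp_ordD mulrA.
Qed.

Definition linpoly_poly (s : coefs) : {poly K} := \sum_(l < H) s l *: 'X^(q ^ l).

Lemma horner_linpoly_poly s x : (linpoly_poly s).[x] = lin s x.
Proof.
by rewrite horner_sum; apply: eq_bigr => l _; rewrite hornerZ hornerXn.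
Qed.

Lemma coef_linpoly_poly s (l : 'I_H) : (linpoly_poly s)`_(q ^ l) = s l.
Proof.
by rewrite coef_sumMXn (big_pred1 l) // => i /=; rewrite eqn_exp2l ?q_gt1.
Qed.

Lemma size_linpoly_poly s : (size (linpoly_poly s) <= (q ^ H.-1).+1)%N.
Proof.
apply/leq_sizeP => j j_gt; rewrite coef_sumMXn big_pred0 // => i /=.
apply: contraTF j_gt => /eqP <-; rewrite -ltnNge ltnS leq_exp2l ?q_gt1 //.
by rewrite -ltnS.
Qed.

Lemma linpoly_roots_eq0 s (r : seq K) : uniq r -> (q ^ H.-1 < size r)%N ->
  {in r, forall x, lin s x = 0} -> forall l, s l = 0.
Proof.
move=> r_uniq r_size r_roots l.
suff s0 : linpoly_poly s = 0 by rewrite -coef_linpoly_poly s0 coef0.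
apply: contraTeq r_size => s_neq0; rewrite -leqNgt -ltnS.
apply: leq_trans (size_linpoly_poly s); apply: max_poly_roots s_neq0 _ r_uniq.
by apply/allP => x /r_roots x_root; rewrite /root horner_linpoly_poly x_root.
Qed.

Lemma linpoly_coef_inj s t : lin s =1 lin t -> s =1 t.
Proof.
move=> st l; apply/eqP; rewrite -subr_eq0; apply/eqP.
apply: (@linpoly_roots_eq0 (fun l => s l - t l) (enum K) (enum_uniq _)) => [|x _].
  by rewrite -cardE cardK ltn_exp2l ?q_gt1.
rewrite /linpoly; under eq_bigr do rewrite mulrBl.
by rewrite sumrB -!/(linpoly _ _ _) st subrr.
Qed.

Lemma injective_linpoly_neq0 t : injective (lin t) -> exists k, t k != 0.
Proof.
move=> t_inj; apply/existsP; apply: contraT; rewrite negb_exists => /forallP t0.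
have : lin t 1 = lin t 0.
  by rewrite linpoly0; apply: big1 => k _; rewrite (eqP (negbNE (t0 k))) mul0r.
by move/t_inj/eqP; rewrite oner_eq0.
Qed.

Lemma iter_linpoly s k : exists u, iter k (lin s) =1 lin u.
Proof.
elim: k => [|k [u uE]]; first by exists coef_id => x; rewrite linpoly_id.
by exists (coef_comp s u) => x; rewrite iterS uE linpoly_comp.
Qed.

(* The inverse of lin s, a permutation of K of some order o, is its (o-1)-st
   iterate. *)
Lemma linpoly_inv s sinv : cancel (lin s) sinv -> cancel sinv (lin s) ->
  exists u, sinv =1 lin u.
Proof.
move=> sK sinvK; pose sigma : {perm K} := perm (can_inj sK).
have [u uE] := iter_linpoly s (#[sigma]%g).-1.
exists u => x; rewrite -uE.
have iter_order : iter #[sigma]%g (lin s) x = x.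
  rewrite -[RHS](perm1 x) -(expg_order sigma) permX.
  by apply: eq_iter => y; rewrite permE.
by rewrite -{1}iter_order -(prednK (order_gt0 sigma)) iterS sK.
Qed.

Definition dickson_mx (s : coefs) : 'M[K]_H := \matrix_(i, j) s (j - i) ^+ (q ^ i).

Lemma dickson_mx_comp s t :
  dickson_mx (coef_comp s t) = dickson_mx s *m dickson_mx t.
Proof.
apply/matrixP => i j; rewrite !mxE /coef_comp qexp_sum.
rewrite [RHS](reindex_inj (addIr i)) /=; apply: eq_bigr => k _.
by rewrite !mxE exprMn qexp_ordD addrK [(k + i)%R]addrC opprD addrA.
Qed.

Lemma dickson_mx_id : dickson_mx coef_id = 1%:M.
Proof.
apply/matrixP => i j; rewrite !mxE /coef_id subr_eq0 eq_sym.
by case: (i == j); rewrite ?expr1n ?qexp0.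
Qed.

Lemma dickson_mx_unit s : bijective (lin s) -> dickson_mx s \in unitmx.
Proof.
case=> sinv sK sinvK; have [u uE] := linpoly_inv sK sinvK.
have us : coef_comp u s =1 coef_id.
  by apply: linpoly_coef_inj => x; rewrite -linpoly_comp -uE sK linpoly_id.
suff /mulmx1_unit[] : dickson_mx u *m dickson_mx s = 1%:M by [].
by rewrite -dickson_mx_comp -dickson_mx_id; apply/matrixP => i j; rewrite !mxE us.
Qed.

Definition twisted (f g t : coefs) (a b c : K) : Prop :=
  forall y, a * lin f (b * y) = lin g (c * lin t y).

Lemma twisted_of_Prop_m_eqs f g finv ginv m (a b c : nat -> K) :
  cancel (lin f) finv -> cancel finv (lin f) ->
  cancel (lin g) ginv -> cancel ginv (lin g) ->
  (forall j, (j < m)%N -> forall x, a j * lin f (b j * finv x) = lin g (c j * ginv x)) ->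
  exists2 t, bijective (lin t) &
    forall j, (j < m)%N -> twisted f g t (a j) (b j) (c j).
Proof.
move=> fK finvK gK ginvK eqs; have [u ginvE] := linpoly_inv gK ginvK.
have tE y : lin (coef_comp u f) y = ginv (lin f y) by rewrite -linpoly_comp ginvE.
exists (coef_comp u f).
  by exists (fun x => finv (lin g x)) => x; rewrite tE ?ginvK ?finvK ?fK ?gK.
by move=> j j_lt y; rewrite tE -eqs // fK.
Qed.

Lemma twisted_coef f g t a b c : twisted f g t a b c ->
  forall l, a * (f l * b ^+ (q ^ l)) = lin (fun i => g i * t (l - i) ^+ (q ^ i)) c.
Proof.
move=> twist l.
have coefE : lin (fun l => a * (f l * b ^+ (q ^ l))) =1
             lin (coef_comp (fun i => g i * c ^+ (q ^ i)) t).
  by move=> y; rewrite -linpoly_scale -linpoly_argM twist linpoly_argM linpoly_comp.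
by rewrite (linpoly_coef_inj coefE); apply: eq_bigr => i _; rewrite mulrAC.
Qed.

Lemma twisted_support_le f g t (a b c : nat -> K) m :
  (q ^ H.-1 < m)%N -> uniq [seq c j | j <- iota 0 m] -> injective (lin t) ->
  (forall j, (j < m)%N -> twisted f g t (a j) (b j) (c j)) ->
  (#|[set i | g i != 0%R]| <= #|[set i | f i != 0%R]|)%N.
Proof.
move=> m_gt c_uniq t_inj twist.
have [k tk_neq0] := injective_linpoly_neq0 t_inj.
rewrite -(card_imset _ (addIr k)); apply: subset_leq_card.
apply/subsetP => _ /imsetP[i gi_neq0 ->]; rewrite !inE in gi_neq0 *.
apply: contra gi_neq0 => /eqP fik0.
have /(_ i) : forall i', g i' * t (i + k - i') ^+ (q ^ i') = 0.
  apply: (linpoly_roots_eq0 c_uniq); first by rewrite size_map size_iota.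
  move=> x /mapP[j]; rewrite mem_iota add0n => /= j_lt ->.
  by rewrite -(twisted_coef (twist j j_lt)) fik0 mul0r mulr0.
rewrite [i + k]addrC addrK => /eqP.
by rewrite mulf_eq0 expf_eq0 (negbTE tk_neq0) andbF orbF.
Qed.

Definition frob_shift (s : coefs) : coefs := fun i => s (i - 1) ^+ q.

Lemma linpoly_frob_shift s x : lin (frob_shift s) x = lin s x ^+ q.
Proof.
have qexpS (y : K) (l : 'I_H) : (y ^+ (q ^ l)) ^+ q = y ^+ (q ^ (l + 1)%R).
  by rewrite -qexp_ordD /= expn1.
rewrite /linpoly expr_sum_pchar // [LHS](reindex_inj (addIr 1)).
by apply: eq_bigr => l _; rewrite /frob_shift addrK exprMn qexpS.
Qed.

Lemma twisted_frob_shift f g t a b c : twisted f g t a b c ->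
  twisted (frob_shift f) (frob_shift g) t (a ^+ q) b c.
Proof. by move=> twist y; rewrite !linpoly_frob_shift -exprMn twist. Qed.

Definition twisted_mx (t g f : coefs) : 'M[K]_H :=
  \matrix_(i, l) (g i * t (l - i) ^+ (q ^ i) * f l).

Lemma twisted_mx_unit t g f : bijective (lin t) ->
  (forall i, g i != 0) -> (forall l, f l != 0) -> twisted_mx t g f \in unitmx.
Proof.
move=> t_bij g_nz f_nz.
have -> : twisted_mx t g f =
          diag_mx (\row_i g i) *m dickson_mx t *m diag_mx (\row_l f l).
  by apply/matrixP => i l; rewrite mul_mx_diag mul_diag_mx !mxE.
rewrite !unitmx_mul dickson_mx_unit // !unitmxE !det_diag !unitfE andbT.
by apply/andP; split; apply/prodf_neq0 => i _; rewrite mxE.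
Qed.

Lemma twisted_eigenvalue f g t a b c : bijective (lin t) ->
  (forall l, f l != 0) -> (forall i, g i != 0) -> c != 0 -> twisted f g t a b c ->
  eigenvalue (invmx (twisted_mx t g (frob_shift f)) *m twisted_mx t (frob_shift g) f)
             (a ^+ q.-1).
Proof.
move=> t_bij f_nz g_nz c_neq0 twist.
have P_unit : twisted_mx t g (frob_shift f) \in unitmx.
  by apply: twisted_mx_unit => // l; rewrite expf_neq0.
pose z : 'rV_H := \row_i c ^+ (q ^ i).
have zM g' f' l : (z *m twisted_mx t g' f') 0 l =
                  lin (fun i => g' i * t (l - i) ^+ (q ^ i)) c * f' l.
  by rewrite !mxE /linpoly mulr_suml; apply: eq_bigr => i _; rewrite !mxE; ring.
(* b^(q^l) cancels between the l-th coefficients of the relation and of its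
   q-th power. *)
have b_free : a ^+ q.-1 *: (z *m twisted_mx t g (frob_shift f)) =
              z *m twisted_mx t (frob_shift g) f.
  apply/rowP => l; rewrite mxE !zM -(twisted_coef twist).
  rewrite -(twisted_coef (twisted_frob_shift twist)).
  have aq : a ^+ q = a * a ^+ q.-1 by rewrite -exprS prednK // ltnW // q_gt1.
  by rewrite aq; ring.
apply/eigenvalueP; exists (z *m twisted_mx t g (frob_shift f)).
  by rewrite mulmxA mulmxK // b_free.
apply/eqP => zP0; move/eqP: c_neq0; apply.
have /rowP/(_ 0) : z = 0 by rewrite -(mulmxK P_unit z) zP0 mul0mx.
by rewrite !mxE expr1.
Qed.

Lemma twisted_full_support_bound f g t (a b c : nat -> K) m : bijective (lin t) ->
  (forall l, f l != 0) -> (forall i, g i != 0) ->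
  uniq [seq a j | j <- iota 0 m] -> (forall j, (j < m)%N -> c j != 0) ->
  (forall j, (j < m)%N -> twisted f g t (a j) (b j) (c j)) ->
  (m <= H * q.-1)%N.
Proof.
move=> t_bij f_nz g_nz a_uniq c_nz twist.
pose A := invmx (twisted_mx t g (frob_shift f)) *m twisted_mx t (frob_shift g) f.
pose L := [seq x <- enum K | root (char_poly A) x].
have size_L : (size L <= H)%N.
  rewrite -ltnS -(size_char_poly A).
  apply: max_poly_roots (monic_neq0 (char_poly_monic A)) _ _.
    by apply/allP => x; rewrite mem_filter => /andP[].
  by rewrite filter_uniq ?enum_uniq.
apply: leq_trans (leq_mul size_L (leqnn q.-1)).
have := size_le_fibers (e := q.-1) _ a_uniq; rewrite size_map size_iota; apply.
  by rewrite -subn1 subn_gt0 q_gt1.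
move=> x /mapP[j]; rewrite mem_iota add0n => /= j_lt ->.
rewrite mem_filter mem_enum andbT -eigenvalue_root_char.
exact: twisted_eigenvalue (c_nz j j_lt) (twist j j_lt).
Qed.

Lemma Prop_m_support_le f g finv ginv m : (q ^ H.-1 < m)%N ->
  cancel (lin f) finv -> cancel finv (lin f) ->
  cancel (lin g) ginv -> cancel ginv (lin g) ->
  Prop_m m (lin f) finv (lin g) ginv ->
  (#|[set i | g i != 0%R]| <= #|[set i | f i != 0%R]|)%N.
Proof.
move=> m_gt fK finvK gK ginvK [a [b [c [_ _ eqs distinct]]]].
have [t /bij_inj t_inj twist] := twisted_of_Prop_m_eqs fK finvK gK ginvK eqs.
apply: twisted_support_le m_gt _ t_inj twist.
by apply: uniq_map_iota => i j i_lt j_lt ij; case: (distinct i j i_lt j_lt ij).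
Qed.

Lemma Prop_m_full_support_bound f g finv ginv m :
  cancel (lin f) finv -> cancel finv (lin f) ->
  cancel (lin g) ginv -> cancel ginv (lin g) ->
  Prop_m m (lin f) finv (lin g) ginv ->
  (forall l, f l != 0) -> (forall i, g i != 0) -> (m <= H * q.-1)%N.
Proof.
move=> fK finvK gK ginvK [a [b [c [nz _ eqs distinct]]]] f_nz g_nz.
have [t t_bij twist] := twisted_of_Prop_m_eqs fK finvK gK ginvK eqs.
apply: twisted_full_support_bound t_bij f_nz g_nz _ _ twist.
  by apply: uniq_map_iota => i j i_lt j_lt ij; case: (distinct i j i_lt j_lt ij).
by move=> j j_lt; case: (nz j j_lt).
Qed.

End LinearisedPolynomials.

Theorem lemma5p12 (K : finFieldType) (q h m : nat)
  (fc gc : 'I_h -> K) (finv ginv : K -> K) :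
  prime_power q -> #|K| = (q ^ h)%N -> (2 <= h)%N ->
  (maxn (q ^ h.-1) (h * q - 1) < m)%N ->
  cancel (linpoly q fc) finv -> cancel finv (linpoly q fc) ->
  cancel (linpoly q gc) ginv -> cancel ginv (linpoly q gc) ->
  Prop_m m (linpoly q fc) finv (linpoly q gc) ginv ->
  #|[set i : 'I_h | fc i == 0%R]| = #|[set i : 'I_h | gc i == 0%R]| /\
  (1 <= #|[set i : 'I_h | fc i == 0%R]|)%N.
Proof.
move=> q_pp cardK h_ge2 m_gt fK finvK gK ginvK PM.
have q_pchar := prime_power_pchar q_pp cardK.
have {h_ge2} [n hE] : exists n, h = n.+2 by exists (h - 2)%N; rewrite -addn2 subnK.
subst h; move: m_gt; rewrite gtn_max => /andP[m_gt_qpow m_gt_hq].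
have le_gf := Prop_m_support_le q_pchar cardK m_gt_qpow fK finvK gK ginvK PM.
have le_fg := Prop_m_support_le q_pchar cardK m_gt_qpow gK ginvK fK finvK (Prop_m_sym PM).
have same_zeros : #|[set i | fc i == 0]| = #|[set i | gc i == 0]|.
  by apply: card_zeros_eq; apply/eqP; rewrite eqn_leq le_fg le_gf.
split=> //; rewrite lt0n; apply/negP => /eqP no_zeros.
have := Prop_m_full_support_bound q_pchar cardK fK finvK gK ginvK PM
  (card_zeros_eq0 no_zeros) (card_zeros_eq0 (etrans (esym same_zeros) no_zeros)).
rewrite leqNgt => /negP; apply; apply: leq_ltn_trans m_gt_hq.
by rewrite -subn1 mulnBr muln1 leq_sub2l.
Qed.
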